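(* Under the setting in the context, for all $\varepsilon>0$, $t>0$ and $x\in\mathbb{R}$, \[ \frac{\Phi(t/\varepsilon)}{\Phi(0)}\exp\!\left(\frac1\varepsilon[\psi_\varepsilon(t,x)-\psi_\varepsilon(0,x)]\right)\le\mathfrak{B}_\varepsilon(\psi_\varepsilon)(t,x)\le\frac{\Phi(1+t/\varepsilon)}{\Phi(1)}\exp\!\left(\frac1\varepsilon[\psi_\varepsilon(t,x)-\psi_\varepsilon(0,x)]\right). \]
   Context: Fix $\mu\in(0,1)$, $\sigma>0$. Let $\beta(a)=\mu/(1+a)$, $\Phi(a)=\beta(a)\exp(-\int_0^a\beta)=\mu(1+a)^{-1-\mu}$, $\omega(z)=\frac{1}{\sigma\sqrt{2\pi}}e^{-z^2/(2\sigma^2)}$. For each $\varepsilon>0$ let $\phi^0_\varepsilon(x,a)$, $x\in\mathbb{R}$, $a\in[0,1)$, be an initial datum $\phi^0_\varepsilon=v+\varepsilon\eta$ with $v$ bounded, $\exp(-\inf_x\eta(x,\cdot))\in L^1$, $\phi^0_\varepsilon$ Lipschitz in $x$ uniformly in $\varepsilon\in(0,1)$, there is $C>0$ with $\int_0^1\int\Phi(a)\omega(z)e^{\int_0^a\beta}e^{-\eta(x-\varepsilon z,a)}\,\mathrm{d}z\,\mathrm{d}a>e^{-C/\varepsilon}$ for all $\varepsilon,x$, and $\partial_x^2\phi^0_\varepsilon\le\mathfrak{C}_{xx}$ distributionally. Let $n_\varepsilon\ge0$ solve $\partial_tn_\varepsilon+\frac1\varepsilon\partial_an_\varepsilon+\frac1\varepsilon\beta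 n_\varepsilon=0$, $n_\varepsilon(t,x,0)=\int_0^\infty\int\beta(a)\omega(z)n_\varepsilon(t,x-\varepsilon z,a)\,\mathrm{d}z\,\mathrm{d}a$, $n_\varepsilon(0,x,a)=e^{-\phi^0_\varepsilon(x,a)/\varepsilon}\mathbf{1}_{a<1}$; set $\psi_\varepsilon(t,x)=-\varepsilon\ln n_\varepsilon(t,x,0)$. In particular $e^{-\psi_\varepsilon(0,x)/\varepsilon}=\int_0^1\int_{\mathbb{R}}\Phi(a)\omega(z)e^{-\phi^0_\varepsilon(x-\varepsilon z,a)/\varepsilon}e^{\int_0^a\beta}\,\mathrm{d}z\,\mathrm{d}a$. Define $\mathfrak{B}_\varepsilon(\psi_\varepsilon)(t,x)=\int_0^1\int_{\mathbb{R}}\omega(z)\Phi(a+t/\varepsilon)\exp\left(\frac1\varepsilon[\psi_\varepsilon(t,x)-\phi^0_\varepsilon(x-\varepsilon z,a)]\right)\exp\left(\int_0^a\beta\right)\mathrm{d}z\,\mathrm{d}a$. *)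

From HB Require Import structures.
From mathcomp Require Import all_boot all_order all_algebra.
From mathcomp Require Import all_classical all_reals all_analysis.
Set Implicit Arguments. Unset Strict Implicit. Unset Printing Implicit Defensive.
Import Order.TTheory GRing.Theory Num.Theory.
Import numFieldNormedType.Exports.
Local Open Scope classical_set_scope.
Local Open Scope ring_scope.

Section Defs.
Variable R : realType.
Notation leb := (@lebesgue_measure R).

Definition I0inf : set R := `[0, +oo[.
Definition I01 : set R := `[0, 1[.

Definition beta (mu a : R) : R := mu / (1 + a).
(* exp(int_0^a beta) = exp(mu ln(1+a)), since int_0^a mu/(1+s) ds = mu ln(1+a) *)
Definition expIntBeta (mu a : R) : R := expR (mu * ln (1 + a)).
(* Phi(a) = beta(a) exp(-int_0^a beta) = mu (1+a)^(-1-mu) *)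
Definition Phi (mu a : R) : R := mu * powR (1 + a) (- 1 - mu).
Definition omega (sigma z : R) : R :=
  (sigma * Num.sqrt (2 * pi))^-1 * expR (- (z ^+ 2) / (2 * sigma ^+ 2)).

Definition nonneg_test_function (th : R -> R) : Prop :=
  (forall (k : nat) (x : R), derivable (derive1n k th) x 1) /\
  (exists K : R, forall x : R, K < `|x| -> th x = 0) /\
  (forall x : R, 0 <= th x).

Definition dist_d2_le (f : R -> R) (C : R) : Prop :=
  forall th : R -> R, nonneg_test_function th ->
    (\int[leb]_(x in setT) (f x * derive1n 2 th x)%:E
      <= \int[leb]_(x in setT) (C * th x)%:E)%E.

(* n : (t, x, a) |-> n(t,x,a) is a (mild / characteristics) solution of
     d_t n + (1/eps) d_a n + (1/eps) beta n = 0,   t >= 0, a >= 0,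
     n(t,x,0) = int_0^oo int_R beta(a) omega(z) n(t,x-eps z,a) dz da,
     n(0,x,a) = exp(-phi0(x,a)/eps) 1_{a<1}      (a > 0). *)
Definition renewal_solution (mu sigma eps : R) (phi0 : R -> R -> R)
    (n : R -> R -> R -> R) : Prop :=
  (forall t x a, 0 <= t -> 0 <= a -> 0 <= n t x a) /\
  (* transport equation, integrated along characteristics (t+s, a+s/eps) *)
  (forall t x a s, 0 <= t -> 0 <= a -> 0 <= s ->
     n (t + s) x (a + s / eps) * expIntBeta mu (a + s / eps)
       = n t x a * expIntBeta mu a) /\
  (forall t x, 0 <= t ->
     (n t x 0)%:E = (\int[leb]_(a in I0inf)
                      \int[leb]_(z in setT)
                        (beta mu a * omega sigma z * n t (x - eps * z) a)%:E)%E) /\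
  (forall x a, 0 < a ->
     n 0 x a = if a < 1 then expR (- phi0 x a / eps) else 0).

Definition psi (eps : R) (n : R -> R -> R -> R) (t x : R) : R :=
  - eps * ln (n t x 0).

Definition frakB (mu sigma eps : R) (phi0 : R -> R -> R) (ps : R -> R -> R)
    (t x : R) : \bar R :=
  (\int[leb]_(a in I01)
    \int[leb]_(z in setT)
      (omega sigma z * Phi mu (a + t / eps)
        * expR ((ps t x - phi0 (x - eps * z) a) / eps)
        * expIntBeta mu a)%:E)%E.

End Defs.

(* The renewal condition at t = 0 writes n_eps(0,x,0) = exp(-psi_eps(0,x)/eps) as
   int_0^1 int Phi(a) w(a,z) dz da with the positive weight
   w(a,z) = exp(int_0^a beta) omega(z) exp(-phi0_eps(x - eps z, a)/eps), while
   B_eps(psi_eps)(t,x) = exp(psi_eps(t,x)/eps) int_0^1 int Phi(a + t/eps) w(a,z) dz da.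
   As Phi(a) = mu (1+a)^(-1-mu), the ratio Phi(a + s)/Phi(a) is nondecreasing in a,
   hence lies between Phi(s)/Phi(0) and Phi(1 + s)/Phi(1) for a in [0,1]; integrating
   against w gives both bounds. *)

From HB Require Import structures.
From mathcomp Require Import all_boot all_order all_algebra.
From mathcomp Require Import all_classical all_reals all_analysis.
From mathcomp Require Import ring lra measurable_realfun.
Import Order.TTheory GRing.Theory Num.Theory.
Import numFieldNormedType.Exports.
Local Open Scope classical_set_scope.
Local Open Scope ring_scope.

Section renewal_kernels.
Variable R : realType.
Implicit Types mu sigma a b s y z : R.

Lemma Phi_gt0 mu y : 0 < mu -> -1 < y -> 0 < Phi mu y.
Proof. by move=> mu0 y1; rewrite /Phi mulr_gt0 // powR_gt0 //; lra. Qed.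

Lemma Phi_ge0 mu y : 0 <= mu -> 0 <= Phi mu y.
Proof. by move=> mu0; rewrite /Phi mulr_ge0 // powR_ge0. Qed.

Lemma Phi_expIntBeta mu a : -1 < a -> Phi mu a * expIntBeta mu a = beta mu a.
Proof.
move=> a1; have a1' : 0 < 1 + a by lra.
rewrite /Phi /expIntBeta /beta /powR gt_eqF // -mulrA -expRD -mulrDl.
by rewrite addrNK mulN1r expRN lnK.
Qed.

Lemma Phi_shift_ratio_le mu a b s : 0 <= mu -> -1 < a <= b -> 0 <= s ->
  Phi mu (a + s) * Phi mu b <= Phi mu (b + s) * Phi mu a.
Proof.
move=> mu0 /andP[a1 ab] s0.
have mulPhi y y' : -1 < y -> -1 < y' ->
    Phi mu y * Phi mu y' = mu * mu * ((1 + y) * (1 + y')) `^ (- (1 + mu)).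
  by move=> y1 y'1; rewrite /Phi mulrACA -powRM ?opprD //; lra.
rewrite !mulPhi; try lra.
rewrite ler_wpM2l ?mulr_ge0 // !powRN lef_pV2 ?posrE ?powR_gt0 //; try nra.
by apply: ge0_ler_powR; rewrite ?nnegrE; nra.
Qed.

Lemma Phi_shift_ge mu a s : 0 < mu -> 0 <= a -> 0 <= s ->
  Phi mu s / Phi mu 0 * Phi mu a <= Phi mu (a + s).
Proof.
move=> mu_gt0 a_ge0 s_ge0.
have Phi0_gt0 : 0 < Phi mu 0 by rewrite Phi_gt0 //; lra.
rewrite mulrAC ler_pdivrMr // -[X in Phi mu X * _]add0r.
apply: Phi_shift_ratio_le => //; [exact: ltW | rewrite a_ge0 andbT; lra].
Qed.

Lemma Phi_shift_le mu a s : 0 < mu -> -1 < a <= 1 -> 0 <= s ->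
  Phi mu (a + s) <= Phi mu (1 + s) / Phi mu 1 * Phi mu a.
Proof.
move=> mu_gt0 a_bnd s_ge0.
have Phi1_gt0 : 0 < Phi mu 1 by rewrite Phi_gt0 //; lra.
by rewrite mulrAC ler_pdivlMr //; apply: Phi_shift_ratio_le => //; exact: ltW.
Qed.

Lemma measurable_Phi mu : measurable_fun setT (Phi mu).
Proof.
apply: measurable_funM => //; apply: measurableT_comp (measurable_powR _) _.
exact: measurable_funD.
Qed.

Lemma measurable_expIntBeta mu : measurable_fun setT (expIntBeta mu).
Proof.
apply: measurableT_comp => //; apply: measurable_funM => //.
by apply: measurableT_comp => //; exact: measurable_funD.
Qed.

Lemma measurable_omega sigma : measurable_fun setT (omega sigma).
Proof.
apply: measurable_funM => //; apply: measurableT_comp => //.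
by apply: measurable_funM => //; apply: measurable_funN; exact: measurable_funX.
Qed.

Lemma omega_gt0 sigma z : 0 < sigma -> 0 < omega sigma z.
Proof.
move=> s0; rewrite /omega mulr_gt0 ?expR_gt0 // invr_gt0 mulr_gt0 //.
by rewrite sqrtr_gt0 mulr_gt0 // pi_gt0.
Qed.
End renewal_kernels.

Section iterated_integrals.
Variable R : realType.
Notation leb := (@lebesgue_measure R).
Local Open Scope ereal_scope.

Lemma integral_gt0 d (T : measurableType d) (m : {measure set T -> \bar R})
    (D : set T) (f : T -> \bar R) :
  measurable D -> m D != 0 -> measurable_fun D f -> (forall x, D x -> 0 < f x) ->
  0 < \int[m]_(x in D) f x.
Proof.
move=> mD mD0 mf f_gt0.
rewrite lt_neqAle integral_ge0 ?andbT; last by move=> x /f_gt0/ltW.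
apply/negP => /eqP/esym intf0.
have /(ae_eq_integral_abs m mD mf) [N [mN N0 fN]] : \int[m]_(x in D) `|f x| = 0.
  by rewrite -intf0; apply: eq_integral => x /set_mem Dx; rewrite gee0_abs // ltW // f_gt0.
move/eqP: mD0; apply; apply: (subset_measure0 _ _ _ N0) => // x Dx.
by apply: fN => /= /(_ Dx) fx0; move: (f_gt0 x Dx); rewrite fx0 ltxx.
Qed.

Lemma eq_integral_patch_setD1 (D1 D2 : set R) (f g : R -> \bar R) (r : R) :
  measurable D1 -> measurable D2 -> measurable_fun (D2 `\ r) g ->
  f \_ (D1 `\ r) = g \_ (D2 `\ r) ->
  \int[leb]_(x in D1) f x = \int[leb]_(x in D2) g x.
Proof.
move=> mD1 mD2 mg fg.
have mD1r : measurable (D1 `\ r) by exact: measurableD.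
have mD2r : measurable (D2 `\ r) by exact: measurableD.
have mf : measurable_fun (D1 `\ r) f.
  by apply/(measurable_restrictT _ mD1r); rewrite fg; exact/(measurable_restrictT _ mD2r).
by rewrite -(integral_setD1 mD1r) // integral_mkcond fg -integral_mkcond integral_setD1.
Qed.

Section nonneg_integrand.
Variable f : R * R -> R.
Hypothesis mf : measurable_fun setT f.
Hypothesis f_ge0 : forall p, (0 <= f p)%R.

Lemma measurable_section_EFin a : measurable_fun setT (fun z => (f (a, z))%:E).
Proof. by apply: measurableT_comp => //; exact: measurable_fun_pair2. Qed.

Lemma measurable_inner_integral (D : set R) :
  measurable_fun D (fun a => \int[leb]_(z in setT) (f (a, z))%:E).
Proof.
apply: (measurable_funS (@measurableT _ (measurableTypeR R))) => //.
have := @measurable_fun_fubini_tonelli_F _ _ (measurableTypeR R) (measurableTypeR R)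
  R leb (EFin \o f); apply.
- exact: measurableT_comp.
- by move=> p /=; rewrite lee_fin.
Qed.

Lemma inner_integral_ge0 a : 0 <= \int[leb]_(z in setT) (f (a, z))%:E.
Proof. by apply: integral_ge0 => z _; rewrite lee_fin. Qed.

Lemma iterated_integralZl (D : set R) (c : R) : measurable D -> (0 <= c)%R ->
  \int[leb]_(a in D) \int[leb]_(z in setT) (c * f (a, z))%:E =
  c%:E * \int[leb]_(a in D) \int[leb]_(z in setT) (f (a, z))%:E.
Proof.
move=> mD c0; rewrite -ge0_integralZl //; last first.
- by move=> a _; exact: inner_integral_ge0.
- exact: measurable_inner_integral.
apply: eq_integral => a _; rewrite -ge0_integralZl //.
- exact: measurable_section_EFin.
- by move=> z _; rewrite lee_fin.
Qed.

End nonneg_integrand.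

Lemma le_iterated_integral (D : set R) (f g : R * R -> R) :
  measurable D -> measurable_fun setT f -> measurable_fun setT g ->
  (forall p, (0 <= f p)%R) -> (forall p, (0 <= g p)%R) ->
  (forall a z, D a -> (f (a, z) <= g (a, z))%R) ->
  \int[leb]_(a in D) \int[leb]_(z in setT) (f (a, z))%:E <=
  \int[leb]_(a in D) \int[leb]_(z in setT) (g (a, z))%:E.
Proof.
move=> mD mf mg f_ge0 g_ge0 fg.
apply: ge0_le_integral => //.
- by move=> a _; exact: inner_integral_ge0.
- exact: measurable_inner_integral.
- exact: measurable_inner_integral.
move=> a Da; apply: ge0_le_integral => //.
- by move=> z _; rewrite lee_fin.
- exact: measurable_section_EFin.
- exact: measurable_section_EFin.
- by move=> z _; rewrite lee_fin fg.
Qed.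

End iterated_integrals.

Section renewal_at_time0.
Variables (R : realType) (mu sigma eps : R) (phi0 : R -> R -> R).
Variables (n : R -> R -> R -> R) (x : R).
Hypotheses (mu_gt0 : 0 < mu) (sigma_gt0 : 0 < sigma) (eps_gt0 : 0 < eps).
Hypothesis mphi0 : measurable_fun setT (fun p : R * R => phi0 p.1 p.2).
Hypothesis n_sol : renewal_solution mu sigma eps phi0 n.
Notation leb := (@lebesgue_measure R).

(* For 0 < a < 1, [weight (a, z)] is [exp (int_0^a beta) * omega z * n (0, x - eps z, a)]. *)
Let weight (p : R * R) : R :=
  expIntBeta mu p.1 * omega sigma p.2 * expR (- phi0 (x - eps * p.2) p.1 / eps).

Let weight_gt0 p : 0 < weight p.
Proof.
apply: mulr_gt0; last exact: expR_gt0.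
by apply: mulr_gt0; [exact: expR_gt0 | exact: omega_gt0].
Qed.

Let measurable_weight : measurable_fun setT weight.
Proof.
apply: measurable_funM; first apply: measurable_funM.
- apply: measurableT_comp; [exact: measurable_expIntBeta | exact: measurable_fst].
- apply: measurableT_comp; [exact: measurable_omega | exact: measurable_snd].
have mshift : measurable_fun setT (fun p : R * R => (x - eps * p.2, p.1)).
  by apply: measurable_fun_pair => //; apply: measurable_funB => //; exact: measurable_funM.
apply: measurableT_comp => //; apply: measurable_funM => //; apply: measurable_funN.
exact: (measurableT_comp mphi0 mshift).
Qed.

Let measurable_Phi_weight : measurable_fun setT (fun p : R * R => Phi mu p.1 * weight p).
Proof.
apply: measurable_funM => //.
by apply: measurableT_comp; [exact: measurable_Phi | exact: measurable_fst].
Qed.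

Let measurable_Phi_shift_weight s :
  measurable_fun setT (fun p : R * R => Phi mu (p.1 + s) * weight p).
Proof.
apply: measurable_funM => //; apply: measurableT_comp; first exact: measurable_Phi.
by apply: measurable_funD => //; exact: measurable_fst.
Qed.

Let Phi_weight_ge0 y p : 0 <= Phi mu y * weight p.
Proof. by rewrite mulr_ge0 ?Phi_ge0 ?ltW ?weight_gt0. Qed.

(* The boundary condition at t = 0 only sees the initial datum for a > 0, which
   vanishes beyond a = 1, and there beta * n = Phi * weight. *)
Lemma renewal_birth_at0 :
  (n 0 x 0)%:E = (\int[leb]_(a in @I01 R) \int[leb]_(z in setT)
                    (Phi mu a * weight (a, z))%:E)%E.
Proof.
have [_ [_ [bc init]]] := n_sol; rewrite (bc 0 x (lexx 0)).
apply: (@eq_integral_patch_setD1 R _ _ _ _ 0); first exact: measurable_itv.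
- exact: measurable_itv.
- apply: (@measurable_inner_integral R (fun p => Phi mu p.1 * weight p)).
  + exact: measurable_Phi_weight.
  + by move=> p; exact: Phi_weight_ge0.
apply/funext => a; rewrite !patchE.
have -> : (a \in @I0inf R `\ 0) = (0 < a).
  by rewrite /I0inf in_setD in_set1 mem_setE in_itv /= andbT lt_def andbC.
have -> : (a \in @I01 R `\ 0) = (0 < a < 1).
  rewrite /I01 in_setD in_set1 mem_setE in_itv /=.
  by rewrite [0 < a]lt_def andbC andbA [(_ != _) && _]andbC.
have [a_gt0|] := ltP 0 a; last by [].
have [a_lt1|a_ge1] /= := ltP a 1.
- apply: eq_integral => z _; congr EFin.
  by rewrite init // a_lt1 -Phi_expIntBeta /weight /=; [ring | lra].
- rewrite (eq_integral (cst 0%E)) ?integral0 // => z _.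
  by rewrite init // ltNge a_ge1 mulr0.
Qed.

Let leb_I01_neq0 : (leb (@I01 R) != 0)%E.
Proof. by rewrite /I01 lebesgue_measure_itv /= lte_fin ltr01 /= sube0 eqe oner_eq0. Qed.

Lemma renewal_birth_at0_gt0 : 0 < n 0 x 0.
Proof.
rewrite -lte_fin renewal_birth_at0; apply: integral_gt0 => //.
- exact: measurable_itv.
- apply: (@measurable_inner_integral R (fun p => Phi mu p.1 * weight p)).
  + exact: measurable_Phi_weight.
  + by move=> p; exact: Phi_weight_ge0.
move=> a; rewrite /I01 /= in_itv /= => /andP[a_ge0 _].
apply: integral_gt0 => //.
- apply/eqP => legT0; move/eqP: leb_I01_neq0; apply.
  by apply: (subset_measure0 _ _ _ legT0) => //; exact: measurable_itv.
- apply: (@measurable_section_EFin R (fun p => Phi mu p.1 * weight p)).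
  exact: measurable_Phi_weight.
move=> z _; rewrite lte_fin mulr_gt0 ?weight_gt0 // Phi_gt0 //; lra.
Qed.

Lemma expR_psi_increment t :
  expR ((psi eps n t x - psi eps n 0 x) / eps) =
  expR (psi eps n t x / eps) * n 0 x 0.
Proof.
have n0_gt0 := renewal_birth_at0_gt0.
rewrite {2}/psi (_ : (_ - - eps * ln (n 0 x 0)) / eps =
                     psi eps n t x / eps + ln (n 0 x 0)); last by field; rewrite gt_eqF.
by rewrite expRD lnK // posrE.
Qed.

Lemma frakB_weight t : frakB mu sigma eps phi0 (psi eps n) t x =
  ((expR (psi eps n t x / eps))%:E *
   \int[leb]_(a in @I01 R) \int[leb]_(z in setT) (Phi mu (a + t / eps) * weight (a, z))%:E)%E.
Proof.
rewrite -(@iterated_integralZl R (fun p => Phi mu (p.1 + t / eps) * weight p)).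
- apply: eq_integral => a _; apply: eq_integral => z _; congr EFin.
  by rewrite /weight /= mulrDl expRD; ring.
- exact: measurable_Phi_shift_weight.
- by move=> p; exact: Phi_weight_ge0.
- exact: measurable_itv.
- exact: expR_ge0.
Qed.

Lemma integral_Phi_weight_shift_ge s : 0 <= s ->
  ((Phi mu s / Phi mu 0)%:E *
     \int[leb]_(a in @I01 R) \int[leb]_(z in setT) (Phi mu a * weight (a, z))%:E
   <= \int[leb]_(a in @I01 R) \int[leb]_(z in setT) (Phi mu (a + s) * weight (a, z))%:E)%E.
Proof.
move=> s_ge0; have c_ge0 : 0 <= Phi mu s / Phi mu 0 by rewrite divr_ge0 ?Phi_ge0 ?ltW.
rewrite -(@iterated_integralZl R _ measurable_Phi_weight (fun p => Phi_weight_ge0 p.1 p)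
            _ _ _ c_ge0); last exact: measurable_itv.
apply: (@le_iterated_integral R _ (fun p => Phi mu s / Phi mu 0 * (Phi mu p.1 * weight p))
                                 (fun p => Phi mu (p.1 + s) * weight p)).
- exact: measurable_itv.
- exact: measurable_funM.
- exact: measurable_Phi_shift_weight.
- by move=> p; rewrite mulr_ge0.
- by move=> p; exact: Phi_weight_ge0.
move=> a z; rewrite /I01 /= in_itv /= => /andP[a_ge0 _].
by rewrite mulrA; apply: ler_wpM2r; [exact: ltW | exact: Phi_shift_ge].
Qed.

Lemma integral_Phi_weight_shift_le s : 0 <= s ->
  (\int[leb]_(a in @I01 R) \int[leb]_(z in setT) (Phi mu (a + s) * weight (a, z))%:E
   <= (Phi mu (1 + s) / Phi mu 1)%:E *
        \int[leb]_(a in @I01 R) \int[leb]_(z in setT) (Phi mu a * weight (a, z))%:E)%E.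
Proof.
move=> s_ge0; have c_ge0 : 0 <= Phi mu (1 + s) / Phi mu 1 by rewrite divr_ge0 ?Phi_ge0 ?ltW.
rewrite -(@iterated_integralZl R _ measurable_Phi_weight (fun p => Phi_weight_ge0 p.1 p)
            _ _ _ c_ge0); last exact: measurable_itv.
apply: (@le_iterated_integral R _ (fun p => Phi mu (p.1 + s) * weight p)
                                 (fun p => Phi mu (1 + s) / Phi mu 1 * (Phi mu p.1 * weight p))).
- exact: measurable_itv.
- exact: measurable_Phi_shift_weight.
- exact: measurable_funM.
- by move=> p; exact: Phi_weight_ge0.
- by move=> p; rewrite mulr_ge0.
move=> a z; rewrite /I01 /= in_itv /= => /andP[a_ge0 a_lt1].
rewrite mulrA; apply: ler_wpM2r; first exact: ltW.
by apply: Phi_shift_le => //; lra.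
Qed.

Lemma frakB_ge t : 0 <= t ->
  ((Phi mu (t / eps) / Phi mu 0 * expR ((psi eps n t x - psi eps n 0 x) / eps))%:E
    <= frakB mu sigma eps phi0 (psi eps n) t x)%E.
Proof.
move=> t_ge0; rewrite expR_psi_increment frakB_weight mulrCA EFinM.
rewrite [(_ * n 0 x 0)%:E]EFinM renewal_birth_at0.
apply: lee_wpmul2l; first by rewrite lee_fin expR_ge0.
by apply: integral_Phi_weight_shift_ge; rewrite divr_ge0 // ltW.
Qed.

Lemma frakB_le t : 0 <= t ->
  (frakB mu sigma eps phi0 (psi eps n) t x <=
   (Phi mu (1 + t / eps) / Phi mu 1 * expR ((psi eps n t x - psi eps n 0 x) / eps))%:E)%E.
Proof.
move=> t_ge0; rewrite expR_psi_increment frakB_weight mulrCA EFinM.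
rewrite [(_ * n 0 x 0)%:E]EFinM renewal_birth_at0.
apply: lee_wpmul2l; first by rewrite lee_fin expR_ge0.
by apply: integral_Phi_weight_shift_le; rewrite divr_ge0 // ltW.
Qed.

End renewal_at_time0.

Theorem lemma6 (R : realType) (mu sigma : R)
  (phi0 : R -> R -> R -> R) (v eta : R -> R -> R)
  (n : R -> R -> R -> R -> R) (Cxx : R) :
  0 < mu -> mu < 1 -> 0 < sigma ->
  (* phi0_eps = v + eps eta on R x [0,1) *)
  (forall eps x a, 0 < eps -> 0 <= a < 1 -> phi0 eps x a = v x a + eps * eta x a) ->
  (* v bounded *)
  (exists M : R, forall x a, 0 <= a < 1 -> `|v x a| <= M) ->
  (* exp(- inf_x eta(x, .)) in L^1(0,1) *)
  (@lebesgue_measure R).-integrable (@I01 R)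
     (fun a => ereal_sup [set (expR (- eta x a))%:E | x in [set: R]]) ->
  (* (joint) measurability of the initial data in (x, a) *)
  (forall eps, 0 < eps ->
     measurable_fun [set: R * R] (fun p : R * R => phi0 eps p.1 p.2)) ->
  (* phi0_eps Lipschitz in x, uniformly in eps in (0,1) *)
  (exists L : R, forall eps x y a, 0 < eps < 1 -> 0 <= a < 1 ->
     `|phi0 eps x a - phi0 eps y a| <= L * `|x - y|) ->
  (* lower bound with C > 0 *)
  (exists C : R, 0 < C /\ forall eps x, 0 < eps ->
     ((expR (- C / eps))%:E <
       \int[@lebesgue_measure R]_(a in @I01 R)
         \int[@lebesgue_measure R]_(z in [set: R])
           (Phi mu a * omega sigma z * expIntBeta mu a
             * expR (- eta (x - eps * z) a))%:E)%E) ->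
  (* d_x^2 phi0_eps <= Cxx distributionally *)
  (forall eps a, 0 < eps -> 0 <= a < 1 -> dist_d2_le (fun x => phi0 eps x a) Cxx) ->
  (* n_eps solves the renewal problem *)
  (forall eps, 0 < eps -> renewal_solution mu sigma eps (phi0 eps) (n eps)) ->
  forall eps t x : R, 0 < eps -> 0 < t ->
    ((Phi mu (t / eps) / Phi mu 0
        * expR ((psi eps (n eps) t x - psi eps (n eps) 0 x) / eps))%:E
      <= frakB mu sigma eps (phi0 eps) (psi eps (n eps)) t x)%E /\
    (frakB mu sigma eps (phi0 eps) (psi eps (n eps)) t x
      <= (Phi mu (1 + t / eps) / Phi mu 1
        * expR ((psi eps (n eps) t x - psi eps (n eps) 0 x) / eps))%:E)%E.
Proof.
move=> mu_gt0 _ sigma_gt0 _ _ _ mphi0 _ _ _ n_sol eps t x eps_gt0 t_gt0.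
have [mphi0_eps n_eps_sol] := (mphi0 eps eps_gt0, n_sol eps eps_gt0).
by split; [apply: frakB_ge | apply: frakB_le]; rewrite // ltW.
Qed.
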